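(* In the setting below, for any set $\mathcal{F}$ of fixed possible edges and any input graph $G\in\mathcal{G}$, the random vertex sequence $W=W_0W_1\cdots W_n$ generated by one iteration of the Unweighted Graph Sampler (run until the first $n\ge 1$ with $W_n=W_0$) has finite expected length.
   Context: Setting (unweighted graphs). $V$ is a finite vertex set; graphs are either all directed or all undirected and have no multiple edges; $uv$ denotes the (possible) edge from $u$ to $v$ (for undirected graphs $uv=vu$). $G_0$ is a given graph on $V$ and $\mathcal{F}$ is a given subset of the possible edges on $V$. $\mathcal{G}$ is the set of all graphs $G$ on $V$ having the same degree sequence as $G_0$ (for directed graphs: the same in-degree and the same out-degree at every vertex) and satisfying $E(G)\cap\mathcal{F}=E(G_0)\cap\mathcal{F}$. The set of known edges is $\tilde{\mathcal{F}}=\{uv : uv\in E(G)\text{ for all }G\in\mathcal{G}, \text{ or } uv\notin E(G)\text{ for all }G\in\mathcal{G}\}$ (so $\mathcal{F}\subseteq\tilde{\mathcal{F}}$). For a graph $G$ and vertex $u$ define $N_G(u)=\{v\in V: vu\in E(G),\ vu\notin\tilde{\mathcal{F}}\}$ and $M_G(u)=\{v\in V: uv\notin E(G),\ uv\notin\tilde{\mathcal{F}}\}$. Unweighted Graph Sampler (one iteration, input $G\in\mathcal{G}$): set $W_{-1}=*$ (a dummy symbol), sample $W_0$ uniformly from $\{v\in V: N_G(v)\neq\emptyset\}$, set $n=0$; then repeat: sample $W_{n+1}$ uniformly from $N_G(W_n)\setminus\{W_{n-1}\}$; sample $W_{n+2}$ uniformly from $M_G(W_{n+1})$ (computed in the current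 graph $G$); delete the edge $W_{n+1}W_n$ from $E(G)$ and add the edge $W_{n+1}W_{n+2}$ to $E(G)$; set $n\leftarrow n+2$; until $W_n=W_0$. Output the current $G$. (Here $G$ always denotes the current, progressively modified, graph.) *)

From HB Require Import structures.
From mathcomp Require Import all_boot all_order all_algebra.
Set Implicit Arguments. Unset Strict Implicit. Unset Printing Implicit Defensive.
Import Order.TTheory GRing.Theory Num.Theory.
Local Open Scope ring_scope.

(* A graph on V is a set of ordered pairs (u,v) = the edge "uv".
   d = true : directed graphs; d = false : undirected graphs, represented
   as symmetric sets (uv = vu). Graphs are loopless. *)

Section Sampler.
Variable d : bool.
Variable V : finType.
Local Notation graph := {set V * V}.

Definition wf_graph (G : graph) : bool :=
  [forall u, (u, u) \notin G] &&
  (d || [forall u, forall v, ((u, v) \in G) ==> ((v, u) \in G)]).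

Definition edge_in (F : graph) (u v : V) : bool :=
  if d then (u, v) \in F else ((u, v) \in F) || ((v, u) \in F).

Definition outdeg (G : graph) (u : V) : nat := #|[set v | (u, v) \in G]|.
Definition indeg (G : graph) (u : V) : nat := #|[set v | (v, u) \in G]|.

Variables (G0 F : graph).

Definition in_calG (G : graph) : bool :=
  [&& wf_graph G,
      [forall u, (outdeg G u == outdeg G0 u) && (indeg G u == indeg G0 u)] &
      [forall u, forall v, ((u != v) && edge_in F u v) ==>
                            (((u, v) \in G) == ((u, v) \in G0))]].

Definition known (u v : V) : bool :=
  [forall H : graph, in_calG H ==> ((u, v) \in H)] ||
  [forall H : graph, in_calG H ==> ((u, v) \notin H)].

Definition NG (G : graph) (u : V) : {set V} :=
  [set v | ((v, u) \in G) && ~~ known v u].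
Definition MG (G : graph) (u : V) : {set V} :=
  [set v | ((u, v) \notin G) && ~~ known u v].

Definition del_edge (G : graph) (u v : V) : graph :=
  if d then G :\ (u, v) else G :\ (u, v) :\ (v, u).
Definition add_edge (G : graph) (u v : V) : graph :=
  if d then (u, v) |: G else (u, v) |: ((v, u) |: G).

(* state of the running sampler: (current graph, W_{n-1} (None = the dummy symbol), W_n, W_0) *)
Definition state : finType := (graph * option V * V * V)%type.

(* Sub-stochastic transition kernel of one round (W_n -> W_{n+2}) restricted
   to the outcomes where the sampler has NOT stopped (W_{n+2} <> W_0).
   If a sampling set is empty the sampler is stuck: it never terminates
   (modelled as staying in the current state forever). *)
Definition Krun (s s' : state) : rat :=
  let: (G, p, c, w0) := s in
  let A := [set w in NG G c | Some w != p] in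
  if A == set0 then (s' == s)%:R else
  \sum_(w in A) #|A|%:R^-1 *
     (let B := MG G w in
      if B == set0 then (s' == s)%:R else
      \sum_(x in B | x != w0) #|B|%:R^-1 *
          (s' == (add_edge (del_edge G w c) w x, Some w, x, w0))%:R).

Definition init (G : graph) (s : state) : rat :=
  let: (H, p, c, w0) := s in
  let I := [set v | NG G v != set0] in
  if [&& H == G, p == None, c == w0 & c \in I] then #|I|%:R^-1 else 0.

Fixpoint dist (G : graph) (k : nat) : state -> rat :=
  match k with
  | 0 => init G
  | k'.+1 => fun s' => \sum_(s : state) dist G k' s * Krun s s'
  end.

(* P(T > k), T = number of rounds (the length of W is n = 2T) *)
Definition tail_prob (G : graph) (k : nat) : rat := \sum_(s : state) dist G k s.

End Sampler.

(* The sampler is a sub-stochastic Markov chain on the finite set of states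
   (current graph, W_{n-1}, W_n, W_0); one step is one round, and mass is lost
   exactly when the round closes the walk.  Along the walk the current graph
   keeps the degrees of G0 up to a surplus in-edge at W_n and a missing one at
   W_0.  Fix any H in calG: W_n has an in-edge wW_n of the current graph that
   is not in H, and then w has an out-edge wx of H that is missing from the
   current graph; both are unknown edges, so the round choosing (w, x) has
   positive probability and strictly shrinks the symmetric difference with H.
   Hence from every reachable state the walk closes with positive probability
   within finitely many rounds; by finiteness of the state space some M rounds
   are survived with probability at most q < 1 from every reachable state, so
   P(T > k) decays geometrically and E[T] = sum_k P(T > k) is finite. *)

From HB Require Import structures.
From mathcomp Require Import all_boot all_order all_algebra.
From Stdlib Require Import Classical.
From mathcomp Require Import ring zify.
Set Implicit Arguments. Unset Strict Implicit. Unset Printing Implicit Defensive.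
Import Order.TTheory GRing.Theory Num.Theory.
Local Open Scope ring_scope.

Section Degrees.
Variable V : finType.
Implicit Types (G : {set V * V}) (a b u : V).

Lemma indegD1 G a b u :
  (a, b) \in G -> indeg G u = (indeg (G :\ (a, b)) u + (b == u))%N.
Proof.
move=> Gab; rewrite /indeg; case: (eqVneq b u) => [<-|ne].
  rewrite (cardsD1 a [set v | (v, b) \in G]) inE Gab addnC; congr (_ + _)%N.
  by apply: eq_card => v; rewrite !inE xpair_eqE eqxx andbT.
rewrite addn0; apply: eq_card => v; rewrite !inE xpair_eqE.
by rewrite [u == b]eq_sym (negbTE ne) andbF.
Qed.

Lemma outdegD1 G a b u :
  (a, b) \in G -> outdeg G u = (outdeg (G :\ (a, b)) u + (a == u))%N.
Proof.
move=> Gab; rewrite /outdeg; case: (eqVneq a u) => [<-|ne].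
  rewrite (cardsD1 b [set v | (a, v) \in G]) inE Gab addnC; congr (_ + _)%N.
  by apply: eq_card => v; rewrite !inE xpair_eqE eqxx.
rewrite addn0; apply: eq_card => v; rewrite !inE xpair_eqE.
by rewrite [u == a]eq_sym (negbTE ne).
Qed.

Lemma indegU1 G a b u :
  (a, b) \notin G -> indeg ((a, b) |: G) u = (indeg G u + (b == u))%N.
Proof. by move=> nGab; rewrite (@indegD1 _ a b) ?setU11 // setU1K. Qed.

Lemma outdegU1 G a b u :
  (a, b) \notin G -> outdeg ((a, b) |: G) u = (outdeg G u + (a == u))%N.
Proof. by move=> nGab; rewrite (@outdegD1 _ a b) ?setU11 // setU1K. Qed.

End Degrees.

Lemma sum_indicator (R : pzSemiRingType) (T : finType) (a : T) :
  \sum_t ((t == a)%:R : R) = 1.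
Proof. by rewrite (bigD1 a) //= eqxx big1 ?addr0 // => t /negbTE ->. Qed.

Lemma sumr_neq0_exists (R : nmodType) (I : finType) (P : pred I) (f : I -> R) :
  \sum_(i | P i) f i != 0 -> exists i, P i && (f i != 0).
Proof.
move=> nz; case: (pickP [pred i | P i && (f i != 0)]) => [i Pfi|none]; first by exists i.
move: nz; rewrite big1 ?eqxx // => i Pi.
by apply/eqP; move: (none i); rewrite /= Pi => /negbFE.
Qed.

Lemma sum_inv_card {R : numFieldType} (T : finType) (B : {set T}) :
  B != set0 -> \sum_(x in B) (#|B|%:R^-1 : R) = 1.
Proof.
by move=> nB; rewrite sumr_const -[X in X = _]mulr_natr mulVf // pnatr_eq0 -lt0n card_gt0.
Qed.

Lemma sum_le_geometric (R : realFieldType) (f : nat -> R) (M : nat) (q : R) :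
  (0 < M)%N -> 0 <= q < 1 -> (forall k, 0 <= f k) ->
  (forall a b, (a <= b)%N -> f b <= f a) ->
  (forall k, f (k + M)%N <= q * f k) ->
  forall N, \sum_(k < N) f k <= M%:R * f 0%N / (1 - q).
Proof.
move=> M_gt0 /andP [q_ge0 q_lt1] f_ge0 f_decr f_contr.
set B := M%:R * f 0%N / (1 - q).
have q1_gt0 : 0 < 1 - q by rewrite subr_gt0.
have block_le n : (n <= M)%N -> \sum_(k < n) f k <= M%:R * f 0%N.
  move=> le_nM; apply: le_trans (_ : \sum_(k < n) f 0%N <= _).
    by apply: ler_sum => k _; apply: f_decr.
  by rewrite sumr_const card_ord -[_ *+ n]mulr_natl ler_wpM2r ?ler_nat.
have B_fix : M%:R * f 0%N + q * B = B.
  by rewrite /B; field; rewrite lt0r_neq0.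
move=> N; elim/ltn_ind: N => N IH.
have [le_NM|lt_MN] := leqP N M.
  rewrite (le_trans (block_le N le_NM)) // /B ler_pdivlMr // ler_piMr ?mulr_ge0 ?ler0n //.
  by rewrite lerBlDr lerDl.
rewrite -(subnKC (ltnW lt_MN)) big_split_ord /= -B_fix lerD ?block_le //.
apply: le_trans (_ : \sum_(k < N - M) q * f k <= _).
  by apply: ler_sum => k _; rewrite addnC f_contr.
by rewrite -mulr_sumr ler_wpM2l // IH // ltn_subrL M_gt0 (leq_ltn_trans _ lt_MN).
Qed.

Section SubstochasticChain.
Variables (R : realFieldType) (T : finType) (K : T -> T -> R) (mu : T -> R).
Hypothesis K_ge0 : forall s t, 0 <= K s t.
Hypothesis K_row_le1 : forall s, \sum_t K s t <= 1.
Hypothesis mu_ge0 : forall s, 0 <= mu s.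

Fixpoint chain_dist k : T -> R :=
  match k with 0 => mu | k'.+1 => fun t => \sum_s chain_dist k' s * K s t end.

Definition chain_tail k := \sum_t chain_dist k t.

Fixpoint survival j : T -> R :=
  match j with 0 => fun=> 1 | j'.+1 => fun s => \sum_t K s t * survival j' t end.

Lemma chain_dist_ge0 k t : 0 <= chain_dist k t.
Proof. by elim: k t => [|k IH] t //=; apply: sumr_ge0 => s _; rewrite mulr_ge0. Qed.

Lemma survival_le1 j t : survival j t <= 1.
Proof.
elim: j t => [|j IH] t //=; apply: le_trans (K_row_le1 t).
by apply: ler_sum => s _; rewrite ler_piMr.
Qed.

Lemma survivalS_le j t : survival j.+1 t <= survival j t.
Proof.
elim: j t => [|j IH] t /=.
  by apply: le_trans (K_row_le1 t); apply: ler_sum => s _; rewrite mulr1.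
by apply: ler_sum => s _; apply: ler_wpM2l => //; apply: IH.
Qed.

Lemma survival_decr i j t : (i <= j)%N -> survival j t <= survival i t.
Proof.
move/subnK <-; elim: (j - i)%N => [|n IH] //.
by rewrite addSn; apply: le_trans (survivalS_le _ _) IH.
Qed.

Lemma chain_tailD a b : chain_tail (a + b) = \sum_t chain_dist a t * survival b t.
Proof.
elim: b a => [|b IH] a.
  by rewrite addn0; apply: eq_bigr => t _; rewrite mulr1.
rewrite addnS -addSn IH /=; symmetry.
under eq_bigr do rewrite mulr_sumr.
rewrite exchange_big /=; apply: eq_bigr => u _.
by rewrite mulr_suml; apply: eq_bigr => t _; rewrite mulrA.
Qed.

Lemma chain_tail_decr a b : (a <= b)%N -> chain_tail b <= chain_tail a.
Proof.
move=> le_ab; rewrite -(subnKC le_ab) chain_tailD.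
by apply: ler_sum => t _; rewrite ler_piMr ?chain_dist_ge0 ?survival_le1.
Qed.

Lemma survival1_lt1 s : \sum_t K s t < 1 -> survival 1 s < 1.
Proof. by move=> lt1 /=; under eq_bigr do rewrite mulr1. Qed.

Lemma survivalS_lt1 s t j : 0 < K s t -> survival j t < 1 -> survival j.+1 s < 1.
Proof.
move=> Kst_gt0 surv_lt1 /=; apply: lt_le_trans (K_row_le1 s).
rewrite -subr_gt0 -sumrB (bigD1 t) //= ltr_pwDl //.
  by rewrite -{1}(mulr1 (K s t)) -mulrBr mulr_gt0 // subr_gt0.
apply: sumr_ge0 => u _.
by rewrite -{1}(mulr1 (K s u)) -mulrBr mulr_ge0 // subr_ge0 survival_le1.
Qed.

Variable reachable : T -> Prop.
Hypothesis chain_dist_reachable : forall k t, chain_dist k t != 0 -> reachable t.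
Hypothesis reachable_survival_lt1 : forall t, reachable t -> exists j, survival j t < 1.

Lemma survival_uniform_bound :
  exists M q, [/\ (0 < M)%N, 0 <= q < 1 & forall t, reachable t -> survival M t <= q].
Proof.
suff [M [q [M_gt0 q01 Hq]]] : exists M q,
    [/\ (0 < M)%N, 0 <= q < 1 & forall t, t \in enum T -> reachable t -> survival M t <= q].
  by exists M, q; split=> // t; apply: Hq; rewrite mem_enum.
elim: (enum T) => [|a l [M [q [M_gt0 /andP [q_ge0 q_lt1] Hq]]]].
  by exists 1%N, 0; rewrite lexx ltr01.
have [reach_a|unreach_a] := classic (reachable a); last first.
  exists M, q; rewrite q_ge0 q_lt1; split=> // t.
  by rewrite inE => /orP [/eqP -> /unreach_a|/Hq].
have [j surv_a] := reachable_survival_lt1 reach_a.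
pose M' := maxn M j; exists M', (Num.max q (survival M' a)).
split.
- by rewrite (leq_trans M_gt0) ?leq_maxl.
- rewrite le_max q_ge0 gt_max q_lt1 /=.
  exact: le_lt_trans (survival_decr _ (leq_maxr M j)) surv_a.
- move=> t; rewrite inE => /orP [/eqP -> _|t_l reach_t].
    by rewrite le_max lexx orbT.
  by rewrite le_max (le_trans (survival_decr _ (leq_maxl M j))) ?Hq.
Qed.

Lemma chain_tail_sum_bounded : exists B, forall N, \sum_(k < N) chain_tail k <= B.
Proof.
have [M [q [M_gt0 q01 Hq]]] := survival_uniform_bound.
have tail_contr k : chain_tail (k + M) <= q * chain_tail k.
  rewrite chain_tailD mulr_sumr; apply: ler_sum => t _.
  have [->|nz] := eqVneq (chain_dist k t) 0; first by rewrite !mul0r mulr0.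
  by rewrite mulrC ler_wpM2r ?chain_dist_ge0 //; apply: Hq; apply: chain_dist_reachable nz.
exists (M%:R * chain_tail 0%N / (1 - q)).
apply: sum_le_geometric => // [k|]; last exact: chain_tail_decr.
by apply: sumr_ge0 => t _; apply: chain_dist_ge0.
Qed.

End SubstochasticChain.

Section Sampler.
Variables (d : bool) (V : finType) (G0 F : {set V * V}).
Local Notation graph := {set V * V}.
Local Notation calG := (in_calG d G0 F).
Local Notation kn := (known d G0 F).
Implicit Types (G H : graph) (u v w c x : V).

Lemma in_calG_wf H : calG H -> wf_graph d H.
Proof. by case/and3P. Qed.

Lemma in_calG_outdeg H u : calG H -> outdeg H u = outdeg G0 u.
Proof. by case/and3P => _ /forallP /(_ u) /andP [/eqP -> _]. Qed.

Lemma in_calG_indeg H u : calG H -> indeg H u = indeg G0 u.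
Proof. by case/and3P => _ /forallP /(_ u) /andP [_ /eqP ->]. Qed.

Lemma wf_graph_loop H u : wf_graph d H -> (u, u) \notin H.
Proof. by case/andP => /forallP /(_ u). Qed.

Lemma wf_graph_sym H u v : wf_graph d H -> ~~ d -> (u, v) \in H -> (v, u) \in H.
Proof. by case/andP => _ /orP [-> //|/forallP /(_ u) /forallP /(_ v) /implyP]. Qed.

Lemma known_agree u v H1 H2 :
  kn u v -> calG H1 -> calG H2 -> ((u, v) \in H1) = ((u, v) \in H2).
Proof.
case/orP => /forallP known_uv calG1 calG2.
  by rewrite (implyP (known_uv H1) calG1) (implyP (known_uv H2) calG2).
by rewrite (negbTE (implyP (known_uv H1) calG1)) (negbTE (implyP (known_uv H2) calG2)).
Qed.

Lemma known_loop u : kn u u.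
Proof. by apply/orP; right; apply/forallP => H; apply/implyP => /in_calG_wf/wf_graph_loop. Qed.

Lemma known_sym u v : ~~ d -> kn u v -> kn v u.
Proof.
move=> undirected /orP [] /forallP known_uv; apply/orP; [left|right];
  apply/forallP => H; apply/implyP => calGH; have := implyP (known_uv H) calGH.
  exact: wf_graph_sym (in_calG_wf calGH) undirected.
by apply: contra => /(wf_graph_sym (in_calG_wf calGH) undirected).
Qed.

Lemma unknown_edge_witnesses u v :
  ~~ kn u v -> exists H1 H2, [/\ calG H1, calG H2, (u, v) \in H1 & (u, v) \notin H2].
Proof.
rewrite negb_or => /andP [/forallPn [H2 +] /forallPn [H1 +]].
by rewrite !negb_imply => /andP [calG2 nH2] /and3P [calG1 H1uv _]; exists H1, H2.
Qed.

(* One round of the sampler with [W_{n+1} = w], [W_n = c], [W_{n+2} = x]. *)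
Definition swap_edge G w c x : graph := add_edge d (del_edge d G w c) w x.

Lemma in_swap_edge G w c x e : (e \in swap_edge G w c x) =
  if d then (e == (w, x)) || ((e != (w, c)) && (e \in G))
  else [|| e == (w, x), e == (x, w) | [&& e != (c, w), e != (w, c) & e \in G]].
Proof. by rewrite /swap_edge /add_edge /del_edge; case: d; rewrite !inE. Qed.

Section Swap.
Variables (G : graph) (w c x : V).
Hypotheses (wfG : wf_graph d G) (Gwc : (w, c) \in G) (nGwx : (w, x) \notin G).
Hypothesis neq_wx : w != x.

Let neq_wc : w != c.
Proof. by apply: contraTneq Gwc => ->; apply: wf_graph_loop. Qed.

Lemma swap_edge_wf : wf_graph d (swap_edge G w c x).
Proof.
apply/andP; split.
  apply/forallP => u.
  rewrite in_swap_edge !xpair_eqE (negbTE (wf_graph_loop u wfG)) !andbF !orbF.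
  have uwx : ((u == w) && (u == x)) = false.
    by apply: contraNF neq_wx => /andP [/eqP <- /eqP <-].
  by case: d; rewrite ?uwx // andbC uwx.
have [//|undirected] := boolP d; apply/forallP => u; apply/forallP => v.
apply/implyP; rewrite !in_swap_edge (negbTE undirected) !xpair_eqE.
case/or3P => [/andP [/eqP -> /eqP ->]|/andP [/eqP -> /eqP ->]|]; rewrite ?eqxx ?orbT //.
case/and3P => ne_cw ne_wc Guv; rewrite (wf_graph_sym wfG undirected Guv) andbT.
by rewrite [(v == c) && _]andbC [(v == w) && (u == c)]andbC (negbTE ne_cw) (negbTE ne_wc) !orbT.
Qed.

Let in_G_minus_back (undirected : ~~ d) : (c, w) \in G :\ (w, c).
Proof.
rewrite !inE (wf_graph_sym wfG undirected Gwc) andbT xpair_eqE.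
by apply: contra neq_wc => /andP [].
Qed.

Let notin_swap_parts (undirected : ~~ d) :
  (x, w) \notin G :\ (w, c) :\ (c, w) /\
  (w, x) \notin (x, w) |: (G :\ (w, c) :\ (c, w)).
Proof.
split; first by rewrite !inE (negbTE (contra (wf_graph_sym wfG undirected) nGwx)) !andbF.
rewrite !inE (negbTE nGwx) !andbF orbF xpair_eqE.
by apply: contra neq_wx => /andP [].
Qed.

Lemma swap_edge_indeg u :
  (indeg (swap_edge G w c x) u + (c == u) = indeg G u + (x == u))%N.
Proof.
rewrite /swap_edge /add_edge /del_edge (indegD1 u Gwc).
have [_|undirected] := boolP d.
  by rewrite indegU1 ?in_setD1 ?negb_and ?nGwx ?orbT //; lia.
have [nGxw nGwx'] := notin_swap_parts undirected.
rewrite (indegD1 u (in_G_minus_back undirected)) !indegU1 //; lia.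
Qed.

Lemma swap_edge_outdeg u :
  (outdeg (swap_edge G w c x) u + (~~ d && (c == u)) =
   outdeg G u + (~~ d && (x == u)))%N.
Proof.
rewrite /swap_edge /add_edge /del_edge (outdegD1 u Gwc).
have [_|undirected] := boolP d.
  by rewrite outdegU1 ?in_setD1 ?negb_and ?nGwx ?orbT //; lia.
have [nGxw nGwx'] := notin_swap_parts undirected.
rewrite (outdegD1 u (in_G_minus_back undirected)) !outdegU1 //; lia.
Qed.

End Swap.

Lemma swap_edge_known G w c x u v : kn u v -> ~~ kn w c -> ~~ kn w x ->
  ((u, v) \in swap_edge G w c x) = ((u, v) \in G).
Proof.
move=> kuv nkwc nkwx.
have neq_known a b : ~~ kn a b -> ((u, v) == (a, b)) = false.
  by move=> nkab; apply: contraNF nkab => /eqP [<- <-].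
rewrite in_swap_edge; case: ifP => [_|/negbT undirected]; first by rewrite !neq_known.
by rewrite !neq_known // (contra (known_sym undirected)).
Qed.

Local Notation K := (Krun d G0 F).
Local Notation NGs := (NG d G0 F).
Local Notation MGs := (MG d G0 F).

Definition continue_prob G w w0 : rat :=
  if MGs G w == set0 then 1 else \sum_(x in MGs G w | x != w0) #|MGs G w|%:R^-1.

Lemma Krun_rowE G p c w0 : \sum_t K (G, p, c, w0) t =
  let A := [set w in NGs G c | Some w != p] in
  if A == set0 then 1 else \sum_(w in A) #|A|%:R^-1 * continue_prob G w w0.
Proof.
rewrite /Krun /=; case: ifP => _; first exact: sum_indicator.
rewrite exchange_big; apply: eq_bigr => w _; rewrite -mulr_sumr; congr (_ * _).
rewrite /continue_prob; case: ifP => _; first exact: sum_indicator.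
by rewrite exchange_big; apply: eq_bigr => x _; rewrite -mulr_sumr sum_indicator mulr1.
Qed.

Lemma continue_prob_le1 G w w0 : continue_prob G w w0 <= 1.
Proof.
rewrite /continue_prob; case: ifP => // /negbT nB.
rewrite -[X in _ <= X](sum_inv_card nB) big_mkcondr /=; apply: ler_sum => x _.
by case: ifP => // _; rewrite invr_ge0.
Qed.

Lemma continue_prob_lt1 G w w0 : w0 \in MGs G w -> continue_prob G w w0 < 1.
Proof.
move=> Mw0; have nB : MGs G w != set0 by apply/set0Pn; exists w0.
rewrite /continue_prob (negbTE nB) -[X in _ < X](sum_inv_card nB) big_mkcondr /=.
rewrite [X in _ < X](bigD1 w0) //= [X in X < _](bigD1 w0) //= eqxx add0r ltr_pwDl //.
  by rewrite invr_gt0 ltr0n card_gt0.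
by apply: ler_sum => x _; case: ifP => // _; rewrite invr_ge0.
Qed.

Lemma Krun_ge0 s t : 0 <= K s t.
Proof.
case: s => [[[G p] c] w0] /=; case: ifP => _ //.
apply: sumr_ge0 => w _; rewrite mulr_ge0 ?invr_ge0 //; case: ifP => _ //.
by apply: sumr_ge0 => x _; rewrite mulr_ge0 ?invr_ge0.
Qed.

Lemma Krun_row_le1 s : \sum_t K s t <= 1.
Proof.
case: s => [[[G p] c] w0]; rewrite Krun_rowE /=; case: ifP => // /negbT nA.
rewrite -[X in _ <= X](sum_inv_card nA); apply: ler_sum => w _.
by rewrite ler_piMr ?invr_ge0 ?continue_prob_le1.
Qed.

Lemma Krun_row_lt1 G p c w0 w : w \in NGs G c -> Some w != p -> w0 \in MGs G w ->
  \sum_t K (G, p, c, w0) t < 1.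
Proof.
move=> Nw wp Mw0; set A := [set w in NGs G c | Some w != p].
have Aw : w \in A by rewrite inE Nw.
have nA : A != set0 by apply/set0Pn; exists w.
rewrite Krun_rowE /= -/A (negbTE nA) -[X in _ < X](sum_inv_card nA).
rewrite (bigD1 w) //= [X in _ < X](bigD1 w) //= ltr_leD //.
  by rewrite -[X in _ < X]mulr1 ltr_pM2l ?invr_gt0 ?ltr0n ?card_gt0 ?continue_prob_lt1.
by apply: ler_sum => v _; rewrite ler_piMr ?invr_ge0 ?continue_prob_le1.
Qed.

Lemma Krun_swap_gt0 G p c w0 w x :
  w \in NGs G c -> Some w != p -> x \in MGs G w -> x != w0 ->
  0 < K (G, p, c, w0) (swap_edge G w c x, Some w, x, w0).
Proof.
move=> Nw wp Mx xw0; rewrite /Krun; cbv beta iota zeta.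
have Aw : w \in [set w in NGs G c | Some w != p] by rewrite inE Nw.
case: ifP => [/eqP A0|_]; first by move: Aw; rewrite A0 inE.
rewrite (bigD1 w Aw) ltr_pwDl //; last first.
  apply: sumr_ge0 => v _; rewrite mulr_ge0 ?invr_ge0 //; case: ifP => _ //.
  by apply: sumr_ge0 => y _; rewrite mulr_ge0 ?invr_ge0.
have nA : [set w in NGs G c | Some w != p] != set0 by apply/set0Pn; exists w.
rewrite mulr_gt0 ?invr_gt0 ?ltr0n ?card_gt0 //.
case: ifP => [/eqP B0|_]; first by move: Mx; rewrite B0 inE.
have Bx : (x \in MGs G w) && (x != w0) by rewrite Mx.
have nB : MGs G w != set0 by apply/set0Pn; exists x.
rewrite (bigD1 x Bx) ltr_pwDl ?eqxx ?mulr1 ?invr_gt0 ?ltr0n ?card_gt0 //.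
by apply: sumr_ge0 => y _; rewrite mulr_ge0 ?invr_ge0.
Qed.

Lemma Krun_support G p c w0 t : K (G, p, c, w0) t != 0 ->
  t = (G, p, c, w0) \/ exists w x, [/\ w \in NGs G c, Some w != p, x \in MGs G w,
     x != w0 & t = (swap_edge G w c x, Some w, x, w0)].
Proof.
rewrite /Krun; cbv beta iota zeta.
case: ifP => _; first by rewrite pnatr_eq0 eqb0 negbK => /eqP; left.
case/sumr_neq0_exists => w /andP [Aw]; rewrite mulf_eq0 negb_or => /andP [_].
case: ifP => _; first by rewrite pnatr_eq0 eqb0 negbK => /eqP; left.
case/sumr_neq0_exists => x /andP [/andP [Mx xw0]]; rewrite mulf_eq0 negb_or => /andP [_].
rewrite pnatr_eq0 eqb0 negbK => /eqP ->; right; exists w, x.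
by move: Aw; rewrite inE => /andP [Nw wp].
Qed.

Variable G : graph.

Definition sampler_inv G' c w0 : Prop :=
  [/\ wf_graph d G',
      forall u, (indeg G' u + (w0 == u) = indeg G0 u + (c == u))%N,
      forall u, (outdeg G' u + (~~ d && (w0 == u)) = outdeg G0 u + (~~ d && (c == u)))%N &
      forall u v, kn u v -> ((u, v) \in G') = ((u, v) \in G)].

Lemma sampler_inv_swap G' c w0 w x : sampler_inv G' c w0 ->
  (w, c) \in G' -> ~~ kn w c -> (w, x) \notin G' -> ~~ kn w x ->
  sampler_inv (swap_edge G' w c x) x w0.
Proof.
case=> wfG indegE outdegE knownE Gwc nkwc nGwx nkwx.
have neq_wx : w != x by apply: contraNneq nkwx => <-; apply: known_loop.
split.
- exact: swap_edge_wf.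
- by move=> u; have := swap_edge_indeg wfG Gwc nGwx neq_wx u; have := indegE u; lia.
- by move=> u; have := swap_edge_outdeg wfG Gwc nGwx neq_wx u; have := outdegE u; lia.
- by move=> u v kuv; rewrite swap_edge_known // knownE.
Qed.

Hypothesis calG_G : calG G.

Lemma sampler_inv_start c : sampler_inv G c c.
Proof.
split=> [|u|u|//]; first exact: in_calG_wf.
- by rewrite in_calG_indeg.
- by rewrite in_calG_outdeg.
Qed.

Lemma sampler_inv_unknown G' c w0 H u v : sampler_inv G' c w0 -> calG H ->
  ((u, v) \in G') != ((u, v) \in H) -> ~~ kn u v.
Proof.
case=> _ _ _ knownE calGH; apply: contra => kuv.
by rewrite knownE // (known_agree kuv calG_G calGH).
Qed.

Lemma defect_edge_exists G' c w0 H : sampler_inv G' c w0 -> c != w0 -> calG H ->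
  exists w, (w, c) \in G' /\ (w, c) \notin H.
Proof.
case=> _ indegE _ _ cw0 calGH.
case: (pickP [pred w | ((w, c) \in G') && ((w, c) \notin H)]) => [w /andP []|none].
  by exists w.
have: [set v | (v, c) \in G'] \subset [set v | (v, c) \in H].
  by apply/subsetP => v; rewrite !inE => Gvc; move: (none v); rewrite /= Gvc => /negbFE.
move/subset_leq_card; rewrite -/(indeg H c) -/(indeg G' c) (in_calG_indeg _ calGH).
by have := indegE c; rewrite eq_sym (negbTE cw0) eqxx; lia.
Qed.

Lemma replacement_edge_exists G' c w0 H w : sampler_inv G' c w0 -> calG H ->
  (w, c) \in G' -> (w, c) \notin H -> exists x, (w, x) \in H /\ (w, x) \notin G'.
Proof.
case=> wfG _ outdegE _ calGH Gwc nHwc.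
have neq_wc : w != c by apply: contraTneq Gwc => ->; apply: wf_graph_loop.
case: (pickP [pred x | ((w, x) \in H) && ((w, x) \notin G')]) => [x /andP []|none].
  by exists x.
have: [set x | (w, x) \in H] \proper [set x | (w, x) \in G'].
  apply/properP; split; last by exists c; rewrite !inE.
  by apply/subsetP => x; rewrite !inE => Hwx; move: (none x); rewrite /= Hwx => /negbFE.
move/proper_card; rewrite -/(outdeg H w) -/(outdeg G' w) (in_calG_outdeg _ calGH).
by have := outdegE w; rewrite [c == w]eq_sym (negbTE neq_wc) andbF; lia.
Qed.

Definition symdiff (A B : graph) : graph := (A :\: B) :|: (B :\: A).

Lemma in_symdiff A B e : (e \in symdiff A B) = (e \in A) (+) (e \in B).
Proof. by rewrite !inE; case: (e \in A); case: (e \in B). Qed.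

Lemma symdiff_swap_lt G' H w c x : wf_graph d G' -> wf_graph d H ->
  (w, c) \in G' -> (w, c) \notin H -> (w, x) \in H -> (w, x) \notin G' ->
  (#|symdiff (swap_edge G' w c x) H| < #|symdiff G' H|)%N.
Proof.
move=> wfG wfH Gwc nHwc Hwx nGwx.
have neq_wc : w != c by apply: contraTneq Gwc => ->; apply: wf_graph_loop.
have neq_wx : w != x by apply: contraTneq Hwx => ->; apply: wf_graph_loop.
have neq_cx : c != x by apply: contraTneq Gwc => ->.
apply: proper_card; apply/properP; split; last first.
  exists (w, c); first by rewrite in_symdiff Gwc (negbTE nHwc).
  rewrite in_symdiff in_swap_edge (negbTE nHwc) addbF !xpair_eqE eqxx.
  by case: d; rewrite /= ?eqxx /= (negbTE neq_cx) /= ?andbF ?orbF ?(negbTE neq_wx).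
apply/subsetP => e; rewrite !in_symdiff in_swap_edge.
have [_|undirected] := boolP d.
  have [->|_] := eqVneq e (w, x); first by rewrite Hwx.
  by have [->|_] := eqVneq e (w, c); rewrite //= (negbTE nHwc).
have [->|_] := eqVneq e (w, x); first by rewrite Hwx.
have [->|_] := eqVneq e (x, w); first by rewrite (wf_graph_sym wfH undirected Hwx).
have [->|_] := eqVneq e (w, c); first by rewrite andbF (negbTE nHwc).
have [->|//] := eqVneq e (c, w).
by rewrite (negbTE (contra (wf_graph_sym wfH undirected) nHwc)).
Qed.

Lemma survival_advance H G' p c w0 w :
  calG H -> sampler_inv G' c w0 -> (w, c) \in G' -> (w, c) \notin H -> Some w != p ->
  (forall x, (w, x) \in H -> (w, x) \notin G' -> x != w0 ->
     sampler_inv (swap_edge G' w c x) x w0 ->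
     exists j, survival K j (swap_edge G' w c x, Some w, x, w0) < 1) ->
  exists j, survival K j (G', p, c, w0) < 1.
Proof.
move=> calGH inv Gwc nHwc wp survival_next.
have nkwc : ~~ kn w c by apply: sampler_inv_unknown inv calGH _; rewrite Gwc (negbTE nHwc).
have Nw : w \in NGs G' c by rewrite inE Gwc nkwc.
have [x [Hwx nGwx]] := replacement_edge_exists inv calGH Gwc nHwc.
have nkwx : ~~ kn w x by apply: sampler_inv_unknown inv calGH _; rewrite Hwx (negbTE nGwx).
have Mx : x \in MGs G' w by rewrite inE nGwx nkwx.
have [xw0|xw0] := eqVneq x w0.
  by exists 1%N; apply/survival1_lt1/(Krun_row_lt1 Nw wp); rewrite -xw0.
have [j surv_lt1] := survival_next x Hwx nGwx xw0 (sampler_inv_swap inv Gwc nkwc nGwx nkwx).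
exists j.+1; apply: survivalS_lt1 surv_lt1 => //; [exact: Krun_ge0 | exact: Krun_row_le1 |].
exact: Krun_swap_gt0.
Qed.

Lemma survival_lt1_running H G' p c w0 : calG H -> sampler_inv G' c w0 -> c != w0 ->
  (forall p0, p = Some p0 -> (p0, c) \in H) -> exists j, survival K j (G', p, c, w0) < 1.
Proof.
move=> calGH; have [n] := ubnP #|symdiff G' H|.
elim: n => // n IH in G' p c w0 *; move=> lt_n inv cw0 Hp.
have [w [Gwc nHwc]] := defect_edge_exists inv cw0 calGH.
have wp : Some w != p.
  by case: p Hp => // p0 Hp; apply: contraNneq nHwc => -[->]; apply: Hp.
apply: (survival_advance calGH inv Gwc nHwc wp) => x Hwx nGwx xw0 inv'.
apply: IH inv' xw0 _ => [|_ [<-] //].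
have [wfG _ _ _] := inv.
by rewrite -ltnS (leq_trans _ lt_n) // ltnS symdiff_swap_lt // in_calG_wf.
Qed.

Lemma survival_lt1_start c : NGs G c != set0 -> exists j, survival K j (G, None, c, c) < 1.
Proof.
case/set0Pn => w; rewrite inE => /andP [Gwc nkwc].
have [_ [H [_ calGH _ nHwc]]] := unknown_edge_witnesses nkwc.
apply: (survival_advance (p := None) calGH (sampler_inv_start c) Gwc nHwc isT).
move=> x Hwx nGwx _ inv'.
apply: (survival_lt1_running calGH inv') => [|_ [<-] //].
by apply: contraNneq nGwx => ->.
Qed.

Definition reachable_state (s : state V) : Prop :=
  let: (G', p, c, w0) := s in sampler_inv G' c w0 /\
  match p with
  | None => [/\ c = w0, G' = G & NGs G c != set0]
  | Some p0 => [/\ c != w0, (p0, c) \in G' & ~~ kn p0 c]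
  end.

Lemma reachable_survival_lt1 s : reachable_state s -> exists j, survival K j s < 1.
Proof.
case: s => [[[G' [p0|]] c] w0] [inv []].
  move=> cw0 Gp0c nkp0c; have [H [_ [calGH _ Hp0c _]]] := unknown_edge_witnesses nkp0c.
  by apply: (survival_lt1_running calGH inv cw0) => _ [<-].
by move=> -> ->; apply: survival_lt1_start.
Qed.

Lemma reachable_state_step s t : reachable_state s -> K s t != 0 -> reachable_state t.
Proof.
case: s => [[[G' p] c] w0] reach_s; case/Krun_support => [->|[w [x [Nw _ Mx xw0 ->]]]] //.
move: Nw Mx; rewrite !inE => /andP [Gwc nkwc] /andP [nGwx nkwx].
split; first exact: sampler_inv_swap (proj1 reach_s) Gwc nkwc nGwx nkwx.
by split=> //; rewrite in_swap_edge; case: d; rewrite eqxx.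
Qed.

Lemma init_ge0 s : 0 <= init d G0 F G s.
Proof. by case: s => [[[G' p] c] w0]; rewrite /init; case: ifP => _ //; rewrite invr_ge0. Qed.

Lemma dist_chain_dist k t : dist d G0 F G k t = chain_dist K (init d G0 F G) k t.
Proof. by elim: k t => [|k IH] t //=; apply: eq_bigr => s _; rewrite IH. Qed.

Lemma chain_dist_reachable k t : chain_dist K (init d G0 F G) k t != 0 -> reachable_state t.
Proof.
elim: k t => [|k IH] [[[G' p] c] w0] /=.
  rewrite /init; case: ifP => [/and4P [/eqP -> /eqP -> /eqP -> NGc] _|_]; last by rewrite eqxx.
  by split; [apply: sampler_inv_start | split=> //; move: NGc; rewrite inE].
case/sumr_neq0_exists => s /andP [_]; rewrite mulf_eq0 negb_or => /andP [reach_s Kst].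
exact: reachable_state_step (IH s reach_s) Kst.
Qed.

End Sampler.

Theorem proposition1 (d : bool) (V : finType) (G0 F G : {set V * V}) :
  wf_graph d G0 -> in_calG d G0 F G ->
  exists B : rat, forall N : nat,
    \sum_(k < N) tail_prob d G0 F G k <= B.
Proof.
move=> _ calG_G.
have [B sum_le_B] := chain_tail_sum_bounded (Krun_ge0 d G0 F) (Krun_row_le1 d G0 F)
  (init_ge0 d G0 F G) (chain_dist_reachable calG_G) (reachable_survival_lt1 calG_G).
have tail_probE k : tail_prob d G0 F G k = chain_tail (Krun d G0 F) (init d G0 F G) k.
  by apply: eq_bigr => t _; apply: dist_chain_dist.
by exists B => N; under eq_bigr do rewrite tail_probE.
Qed.
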